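(* Let $(\mathcal{X},d)$ be a finite metric space with initial forest given by a partition $\mathcal{P}=\{P_1,\dots,P_t\}$ of $\mathcal{X}$ and spanning trees $T_i$ on the parts with edge union $E_t$, and let $\gamma=\gamma(\mathcal{P})$ be its overlap parameter. Let $R=\{R_i : i\in[t]\}$ with each $R_i\subseteq P_i$ nonempty, and set $$\alpha = 1+\frac{\mathrm{cost}(\mathcal{P},R)}{w_{\mathcal{X}}(E_t)}.$$ Then the spanning tree $\hat T$ returned by $\textsf{MultiRepMFC}(R)$ satisfies $w_{\mathcal{X}}(\hat T)\le \alpha\, w_{\mathcal{X}}(T^* )$, where $T^*$ is an optimal solution of the Metric Forest Completion problem (i.e. it is an $\alpha$-approximation for MFC), and $w_{\mathcal{X}}(\hat T)\le \alpha\gamma\, w_{\mathcal{X}}(T_{\mathcal{X}})$ where $T_{\mathcal{X}}$ is a minimum spanning tree of $G_{\mathcal{X}}$ (i.e. it is an $(\alpha\gamma)$-approximation for metric MST).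
   Context: $(\mathcal{X},d)$ is a finite metric space, $\mathcal{X}=\{x_1,\dots,x_n\}$, and $G_{\mathcal{X}}$ is the complete graph on $\mathcal{X}$ with edge weights $w_{\mathcal{X}}(u,v)=d(u,v)$; for an edge set $F$, $w_{\mathcal{X}}(F)=\sum_{e\in F}w_{\mathcal{X}}(e)$. For $A,B\subseteq\mathcal{X}$, $d(A,B)=\min_{a\in A,b\in B}d(a,b)$. An initial forest consists of a partition $\mathcal{P}=\{P_1,\dots,P_t\}$ of $\mathcal{X}$ and, for each $i$, a spanning tree $T_i$ of the complete graph on $P_i$; $E_t$ is the union of the edge sets of the $T_i$. The Metric Forest Completion (MFC) problem is: find a minimum-weight spanning tree of $G_{\mathcal{X}}$ whose edge set contains $E_t$. Overlap parameter: let $\mathcal{T}_{\mathcal{X}}$ be the set of minimum spanning trees of $G_{\mathcal{X}}$ and for $T\in\mathcal{T}_{\mathcal{X}}$ let $T(\mathcal{P})$ be the set of edges of $T$ whose two endpoints lie in the same part of $\mathcal{P}$; then $\gamma(\mathcal{P})=w_{\mathcal{X}}(E_t)/\max_{T\in\mathcal{T}_{\mathcal{X}}}w_{\mathcal{X}}(T(\mathcal{P}))$. Cost: $\mathrm{cost}(P_i,R_i)=\max_{x\in P_i}\min_{r\in R_i}d(x,r)$ and $\mathrm{cost}(\mathcal{P},R)=\sum_{i=1}^t\mathrm{cost}(P_i,R_i)$. Algorithm $\textsf{MultiRepMFC}(R)$: for each pair $i\ne j$ in $[t]$ set $\hat w(v_i,v_j)=\min\{d(P_i,R_j),d(P_j,R_i)\}$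 and record a pair of points $(x,y)$ attaining this minimum; compute a minimum spanning tree $\hat T_{\mathcal{P}}$ of the complete graph on nodes $v_1,\dots,v_t$ with weights $\hat w$; return the spanning tree $\hat T$ of $G_{\mathcal{X}}$ consisting of $E_t$ together with the recorded point pairs corresponding to the edges of $\hat T_{\mathcal{P}}$. *)

From HB Require Import structures.
From mathcomp Require Import all_boot all_order all_algebra.
Set Implicit Arguments.
Unset Strict Implicit.
Unset Printing Implicit Defensive.
Import Order.TTheory GRing.Theory Num.Theory.
Local Open Scope ring_scope.

(* minimum / maximum of f over a finite set S (meaningful for S nonempty;
   the default value 0 for empty S is never used in the theorem). *)
Definition fmin {R : realDomainType} {U : finType} (S : {set U}) (f : U -> R) : R :=
  if [pick x in S] is Some x0 then \big[Num.min/f x0]_(x in S) f x else 0.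
Definition fmax {R : realDomainType} {U : finType} (S : {set U}) (f : U -> R) : R :=
  if [pick x in S] is Some x0 then \big[Num.max/f x0]_(x in S) f x else 0.

(* weight of an edge e = {x,y} under a (symmetric) weight function c: c x y *)
Definition edge_w {R : realDomainType} {V : finType} (c : V -> V -> R) (e : {set V}) : R :=
  fmin [set p in setX e e | p.1 != p.2] (fun p => c p.1 p.2).

Definition weight {R : realDomainType} {V : finType} (c : V -> V -> R)
  (F : {set {set V}}) : R := \sum_(e in F) edge_w c e.

Definition adj {V : finType} (F : {set {set V}}) : rel V :=
  [rel x y | [set x; y] \in F].

Definition is_spanning_tree {V : finType} (S : {set V}) (F : {set {set V}}) : bool :=
  [&& [forall e in F, (#|e| == 2) && (e \subset S)],
      [forall x in S, forall y in S, connect (adj F) x y] &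
      [forall e in F, forall x in e, forall y in e,
          (x != y) ==> ~~ connect (adj (F :\ e)) x y]].

Definition is_MST {R : realDomainType} {V : finType} (S : {set V})
  (c : V -> V -> R) (F : {set {set V}}) : bool :=
  is_spanning_tree S F &&
  [forall F' : {set {set V}}, is_spanning_tree S F' ==> (weight c F <= weight c F')].

Definition is_metric {R : realDomainType} {T : finType} (d : T -> T -> R) : Prop :=
  [/\ forall x y, d x y = 0 <-> x = y,
      forall x y, d x y = d y x &
      forall x y z, d x z <= d x y + d y z].

Definition is_initial_forest {T : finType} (P : {set {set T}})
  (Tr : {set T} -> {set {set T}}) : Prop :=
  partition P [set: T] /\ forall A, A \in P -> is_spanning_tree A (Tr A).

Definition Et {T : finType} (P : {set {set T}}) (Tr : {set T} -> {set {set T}})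
  : {set {set T}} := \bigcup_(A in P) Tr A.

Definition is_MFC_opt {R : realDomainType} {T : finType} (d : T -> T -> R)
  (P : {set {set T}}) (Tr : {set T} -> {set {set T}}) (F : {set {set T}}) : bool :=
  [&& is_spanning_tree [set: T] F, Et P Tr \subset F &
      [forall F' : {set {set T}},
         (is_spanning_tree [set: T] F' && (Et P Tr \subset F'))
           ==> (weight d F <= weight d F')]].

Definition within_parts {T : finType} (P : {set {set T}}) (F : {set {set T}})
  : {set {set T}} := [set e in F | [exists A in P, e \subset A]].

Definition gamma_den {R : realDomainType} {T : finType} (d : T -> T -> R)
  (P : {set {set T}}) : R :=
  fmax [set F | is_MST [set: T] d F] (fun F => weight d (within_parts P F)).

Definition gamma {R : realFieldType} {T : finType} (d : T -> T -> R)
  (P : {set {set T}}) (Tr : {set T} -> {set {set T}}) : R :=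
  weight d (Et P Tr) / gamma_den d P.

Definition setdist {R : realDomainType} {T : finType} (d : T -> T -> R)
  (A B : {set T}) : R := fmin (setX A B) (fun p => d p.1 p.2).

Definition cost {R : realDomainType} {T : finType} (d : T -> T -> R)
  (A RA : {set T}) : R := fmax A (fun x => fmin RA (fun r => d x r)).
Definition costP {R : realDomainType} {T : finType} (d : T -> T -> R)
  (P : {set {set T}}) (Rep : {set T} -> {set T}) : R :=
  \sum_(A in P) cost d A (Rep A).

Definition alpha {R : realFieldType} {T : finType} (d : T -> T -> R)
  (P : {set {set T}}) (Tr : {set T} -> {set {set T}}) (Rep : {set T} -> {set T}) : R :=
  1 + costP d P Rep / weight d (Et P Tr).

(* the weights hat w(v_A, v_B) of the contracted graph (vertices = parts) *)
Definition hatw {R : realDomainType} {T : finType} (d : T -> T -> R)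
  (Rep : {set T} -> {set T}) (A B : {set T}) : R :=
  Num.min (setdist d A (Rep B)) (setdist d B (Rep A)).

(* Th is a possible output of MultiRepMFC(R): for some MST TP of the
   contracted complete graph on the parts with weights hatw, and some
   recorded minimizing pairs pr (any tie-breaking), Th is E_t together with
   the recorded pairs of the edges of TP. *)
Definition MultiRepMFC_output {R : realDomainType} {T : finType} (d : T -> T -> R)
  (P : {set {set T}}) (Tr : {set T} -> {set {set T}}) (Rep : {set T} -> {set T})
  (Th : {set {set T}}) : Prop :=
  exists (TP : {set {set {set T}}}) (pr : {set {set T}} -> T * T),
    [/\ is_MST P (hatw d Rep) TP,
        (forall e, e \in TP -> exists A B,
            [/\ e = [set A; B], A != B,
                ((pr e).1 \in A /\ (pr e).2 \in Rep B) \/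
                ((pr e).1 \in B /\ (pr e).2 \in Rep A) &
                d (pr e).1 (pr e).2 = hatw d Rep A B]) &
        Th = Et P Tr :|: [set [set (pr e).1; (pr e).2] | e in TP]].

From HB Require Import structures.
From mathcomp Require Import all_boot all_order all_algebra.
From mathcomp Require Import ring lra.
Import Order.TTheory GRing.Theory Num.Theory.
Local Open Scope ring_scope.

(* Write a := w(E_t) and c := cost(P, R), and let F be any spanning tree of G_X.
   Contract every part P_i to a vertex v_i.  The edges of F joining different
   parts connect the contracted graph, so growing a tree from a root inside them
   yields a spanning tree of it whose edges are charged to pairwise distinct
   endpoints.  An edge xy of F with x in P_i, y in P_j, charged to v_j, satisfies
   hat w(v_i, v_j) <= d(x, r) <= d(x, y) + cost(P_j, R_j) for the representative r
   nearest to y.  Hence the minimum spanning tree of the contracted graph weighs at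
   most w(F \ F(P)) + c, and w(hat T) <= a + w(F \ F(P)) + c.
   For F an optimal completion, of weight OPT >= a, this gives
   w(hat T) <= OPT + c <= alpha OPT (if a = 0 every tree T_i is empty, so every
   part is a singleton and c = 0).  For F an MST T of G_X maximising b := w(T(P))
   it gives w(hat T) <= a + (w(T) - b) + c <= (a + c) w(T) / b = alpha gamma w(T),
   using b <= a: replacing T(P) by E_t in T does not disconnect it. *)

Section FinMinMax.
Context {R : realDomainType} {U : finType}.
Implicit Types (S : {set U}) (f : U -> R).

Lemma fmin_le {S} f {x} : x \in S -> fmin S f <= f x.
Proof.
move=> xS; rewrite /fmin; case: pickP => [x0 _|/(_ x)]; last by rewrite xS.
by rewrite (bigD1 x) //= ge_min lexx.
Qed.

Lemma fmax_ge {S} f {x} : x \in S -> f x <= fmax S f.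
Proof.
move=> xS; rewrite /fmax; case: pickP => [x0 _|/(_ x)]; last by rewrite xS.
by rewrite (bigD1 x) //= le_max lexx.
Qed.

Lemma fmin_attained {S} f {x} : x \in S -> exists2 y, y \in S & fmin S f = f y.
Proof.
move=> xS; rewrite /fmin; case: pickP => [x0 x0S|/(_ x)]; last by rewrite xS.
elim/big_ind: _ => [|_ _ [y yS ->] [z zS ->]|i iS]; first by exists x0.
  by case: (leP (f y) (f z)) => _; [exists y | exists z].
by exists i.
Qed.

Lemma fmax_attained {S} f {x} : x \in S -> exists2 y, y \in S & fmax S f = f y.
Proof.
move=> xS; rewrite /fmax; case: pickP => [x0 x0S|/(_ x)]; last by rewrite xS.
elim/big_ind: _ => [|_ _ [y yS ->] [z zS ->]|i iS]; first by exists x0.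
  by case: (leP (f y) (f z)) => _; [exists z | exists y].
by exists i.
Qed.

Lemma fmin_set0 f : fmin set0 f = 0.
Proof. by rewrite /fmin; case: pickP => [x0|//]; rewrite inE. Qed.

Lemma fmax_set0 f : fmax set0 f = 0.
Proof. by rewrite /fmax; case: pickP => [x0|//]; rewrite inE. Qed.

Lemma fmin_ge0 S f : {in S, forall x, 0 <= f x} -> 0 <= fmin S f.
Proof.
move=> f_ge0; have [->|[x xS]] := set_0Vmem S; first by rewrite fmin_set0.
by have [y yS ->] := fmin_attained f xS; apply: f_ge0.
Qed.

Lemma fmax_le S f m : 0 <= m -> {in S, forall x, f x <= m} -> fmax S f <= m.
Proof.
move=> m_ge0 f_le; have [->|[x xS]] := set_0Vmem S; first by rewrite fmax_set0.
by have [y yS ->] := fmax_attained f xS; apply: f_le.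
Qed.

Lemma fmax_ge0 S f : {in S, forall x, 0 <= f x} -> 0 <= fmax S f.
Proof.
move=> f_ge0; have [->|[x xS]] := set_0Vmem S; first by rewrite fmax_set0.
by have [y yS ->] := fmax_attained f xS; apply: f_ge0.
Qed.

End FinMinMax.

Lemma ler_sum_subset {R : numDomainType} {I : finType} {A B : {set I}} {F : I -> R} :
  A \subset B -> {in B, forall i, 0 <= F i} ->
  \sum_(i in A) F i <= \sum_(i in B) F i.
Proof.
move=> AB F_ge0; rewrite [leRHS](big_setID A) /= (setIidPr AB) lerDl.
by apply: sumr_ge0 => i; rewrite inE => /andP[_ /F_ge0].
Qed.

Lemma ler_sum_imset {R : numDomainType} {I J : finType} (f : I -> J) (A : {set I})
  {G : J -> R} : (forall j, 0 <= G j) ->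
  \sum_(j in f @: A) G j <= \sum_(i in A) G (f i).
Proof.
move=> G_ge0; rewrite (partition_big_imset f) /=; apply: ler_sum => _ /imsetP[i iA ->].
by rewrite (bigD1 i) /= ?iA ?eqxx // lerDl sumr_ge0.
Qed.

Section Weight.
Context {R : realDomainType} {V : finType} {c : V -> V -> R} (c_ge0 : forall x y, 0 <= c x y).
Implicit Types (F G : {set {set V}}).

Lemma edge_w_ge0 e : 0 <= edge_w c e.
Proof. by apply: fmin_ge0 => p _. Qed.

Lemma weight_ge0 F : 0 <= weight c F.
Proof. by apply: sumr_ge0 => e _; apply: edge_w_ge0. Qed.

Lemma weight_subset {F G} : F \subset G -> weight c F <= weight c G.
Proof. by move=> FG; apply: ler_sum_subset => // e _; apply: edge_w_ge0. Qed.

Lemma weight_setU F G : weight c (F :|: G) <= weight c F + weight c G.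
Proof.
rewrite /weight (big_setID F) /= setIUl setIid (setUidPl (subsetIr G F)) lerD2l.
apply: ler_sum_subset => [|e _]; last exact: edge_w_ge0.
by rewrite setDUl setDv set0U subsetDl.
Qed.

End Weight.

Lemma weight_setD {R : realDomainType} {V : finType} (c : V -> V -> R)
  {F G : {set {set V}}} : G \subset F -> weight c F = weight c G + weight c (F :\: G).
Proof. by move=> GF; rewrite /weight (big_setID G) /= (setIidPr GF). Qed.

Lemma edge_w_set2 {R : realDomainType} {V : finType} (c : V -> V -> R) x y :
  (forall a b, c a b = c b a) -> x != y -> edge_w c [set x; y] = c x y.
Proof.
move=> cC xy; have xyS : (x, y) \in [set p in setX [set x; y] [set x; y] | p.1 != p.2].
  by rewrite !inE /= !eqxx orbT xy.
have [[a b]] := fmin_attained (fun p => c p.1 p.2) xyS.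
rewrite /edge_w !inE /= => /andP[/andP[]].
by move=> /pred2P[]-> /pred2P[]-> ab ->; rewrite ?eqxx in ab *; rewrite // cC.
Qed.

Lemma connect_homo {U V : finType} {e : rel U} {e' : rel V} (f : U -> V) :
  (forall x y, e x y -> connect e' (f x) (f y)) ->
  forall x y, connect e x y -> connect e' (f x) (f y).
Proof.
move=> ee' x y /connectP[p p_e ->]; elim: p x p_e => [|z p IHp] x /=.
  by rewrite connect0.
by case/andP=> /ee' xz /IHp; apply: connect_trans.
Qed.

Section Trees.
Context {V : finType}.
Implicit Types (x y : V) (e S U : {set V}) (E F : {set {set V}}).

Lemma adj_sym F : symmetric (adj F).
Proof. by move=> x y; rewrite /adj /= setUC. Qed.

Lemma connect_adj_sym F : connect_sym (adj F).
Proof. exact/sym_connect_sym/adj_sym. Qed.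

Lemma connect_adj_subset {E F x y} :
  E \subset F -> connect (adj E) x y -> connect (adj F) x y.
Proof.
by move=> EF; apply: connect_sub => a b ab; apply: connect1; apply: (subsetP EF).
Qed.

Lemma connect_adj_closed {F U x y} :
  (forall a b, [set a; b] \in F -> a \in U -> b \in U) ->
  connect (adj F) x y -> x \in U -> y \in U.
Proof.
by move=> U_cl /(closed_connect (intro_closed (connect_adj_sym F) U_cl)) ->.
Qed.

Lemma connect_adj0 x y : connect (adj set0) x y -> x = y.
Proof.
move=> xy; suff : y \in [set x] by move/set1P.
by apply: (connect_adj_closed _ xy) => [a b|]; rewrite ?inE.
Qed.

Lemma spanning_treeP S F :
  reflect [/\ {in F, forall e, #|e| = 2 /\ e \subset S},
              {in S &, forall x y, connect (adj F) x y} &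
              forall e x y, e \in F -> x \in e -> y \in e -> x != y ->
                ~~ connect (adj (F :\ e)) x y]
          (is_spanning_tree S F).
Proof.
apply: (iffP and3P) => [[/forall_inP F2 /forall_inP FS /forall_inP Facyc]|[F2 FS Facyc]].
  split=> [e /F2/andP[/eqP -> ->] //|x y /FS/forall_inP xS /xS //|e x y].
  by move=> /Facyc/forall_inP Fe /Fe/forall_inP Fex /Fex/implyP.
split.
- by apply/forall_inP => e /F2[-> ->].
- by apply/forall_inP => x xS; apply/forall_inP => y; apply: FS.
- apply/forall_inP => e eF; apply/forall_inP => x xe; apply/forall_inP => y ye.
  by apply/implyP; apply: Facyc.
Qed.

Lemma spanning_tree1 (s : V) : is_spanning_tree [set s] (set0 : {set {set V}}).
Proof.
by apply/spanning_treeP; split=> [e|x y /set1P-> /set1P->|e x y]; rewrite ?inE ?connect0.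
Qed.

Lemma spanning_tree0 : is_spanning_tree (set0 : {set V}) set0.
Proof. by apply/spanning_treeP; split=> [e|x y|e x y]; rewrite inE. Qed.

Lemma connect_add_pendant {U E u v x y} :
  u \in U -> v \notin U -> x \in U -> y \in U -> {in E, forall e, e \subset U} ->
  connect (adj ([set u; v] |: E)) x y -> connect (adj E) x y.
Proof.
move=> uU vU xU yU EU xy_con.
have uv : u != v by apply: contraNneq vU => <-.
pose g z := if z == v then u else z.
have gU z : z \in U -> g z = z by rewrite /g; case: eqP => // ->; rewrite (negPf vU).
have g_uv z : z \in [set u; v] -> g z = u.
  by rewrite /g => /set2P[]->; rewrite ?eqxx // (negPf uv).
rewrite -(gU x xU) -(gU y yU); apply: (connect_homo g _ x y xy_con) => a b.
rewrite /adj /= => /setU1P[ab_uv|abE].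
  by rewrite !g_uv -?ab_uv ?set21 ?set22 ?connect0.
have [aU bU] : a \in U /\ b \in U by rewrite !(subsetP (EU _ abE)) ?set21 ?set22.
by rewrite !gU // connect1.
Qed.

Lemma spanning_tree_add_leaf U F u v :
  is_spanning_tree U F -> u \in U -> v \notin U ->
  is_spanning_tree (v |: U) ([set u; v] |: F).
Proof.
case/spanning_treeP=> F2 Fcon Facyc uU vU.
have uv : u != v by apply: contraNneq vU => <-.
have FU : {in F, forall e, e \subset U} by move=> e /F2[].
have uvF : [set u; v] \notin F by apply: contraNN vU => /FU/subsetP; apply; rewrite set22.
apply/spanning_treeP; split.
- move=> e /setU1P[->|/F2[-> eU]]; last by split; last exact: subset_trans eU (subsetU1 v U).
  by rewrite cards2 uv subUset !sub1set setU11 setU1r.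
- have to_u a : a \in v |: U -> connect (adj ([set u; v] |: F)) u a.
    case/setU1P=> [->|aU]; first by apply: connect1; rewrite /adj /= setU11.
    exact: connect_adj_subset (subsetUr _ _) (Fcon _ _ uU aU).
  move=> a b aU bU; apply: connect_trans (to_u b bU).
  by rewrite connect_adj_sym to_u.
- move=> e x y /setU1P[->|eF] xe ye xy.
    have no_uv : ~~ connect (adj F) u v.
      apply: contraNN vU => /connect_adj_closed; apply=> // a b abF _.
      by apply: (subsetP (FU _ abF)); rewrite set22.
    rewrite setU1K //; move: xe ye xy => /set2P[]-> /set2P[]->; rewrite ?eqxx // => _.
    by rewrite connect_adj_sym.
  have sub : ([set u; v] |: F) :\ e \subset [set u; v] |: F :\ e.
    by apply/subsetP => f; rewrite !inE => /andP[fe /orP[->|fF]]; rewrite ?fe ?fF ?orbT.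
  apply: contraNN (Facyc _ _ _ eF xe ye xy) => /(connect_adj_subset sub).
  apply: (connect_add_pendant uU vU (subsetP (FU _ eF) _ xe) (subsetP (FU _ eF) _ ye)).
  by move=> f /setD1P[_ /FU].
Qed.

Definition injective_endpoints F (h : {set V} -> V) : Prop :=
  {in F &, injective h} /\ {in F, forall e, h e \in e}.

Lemma injective_endpoints_add_leaf {U F h u v} :
  {in F, forall e, e \subset U} -> v \notin U -> injective_endpoints F h ->
  injective_endpoints ([set u; v] |: F) (fun e => if e == [set u; v] then v else h e).
Proof.
move=> FU vU [h_inj hF].
have hU e : e \in F -> h e \in U by move=> eF; apply: (subsetP (FU e eF)); apply: hF.
have neq e : e \in F -> (e == [set u; v]) = false.
  by move=> eF; apply: contraNF vU => /eqP e_uv; rewrite (subsetP (FU e eF)) // e_uv set22.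
split=> [e1 e2 /setU1P[->|e1F] /setU1P[->|e2F]|e /setU1P[->|eF]];
  rewrite ?eqxx ?neq ?set22 //; last exact: hF.
- by move=> hv; rewrite hv hU in vU.
- by move=> hv; rewrite -hv hU in vU.
- exact: h_inj.
Qed.

Lemma connected_crossing_edge {E S U x y} :
  {in S &, forall x y, connect (adj E) x y} ->
  x \in U -> x \in S -> y \in S -> y \notin U ->
  exists u v, [/\ u \in U, v \notin U & [set u; v] \in E].
Proof.
move=> Econ xU xS yS yU.
have [/existsP[u /existsP[v /and3P[uU vU uvE]]]|no_cross] :=
  boolP [exists u, exists v, [&& u \in U, v \notin U & [set u; v] \in E]].
  by exists u, v.
have U_closed a b : [set a; b] \in E -> a \in U -> b \in U.
  move=> abE aU; apply: contraNT no_cross => bU.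
  by apply/existsP; exists a; apply/existsP; exists b; rewrite aU bU.
by rewrite (connect_adj_closed U_closed (Econ _ _ xS yS) xU) in yU.
Qed.

Lemma connected_spanning_tree_from {E S s} :
  {in E, forall e, #|e| = 2 /\ e \subset S} ->
  {in S &, forall x y, connect (adj E) x y} -> s \in S ->
  exists F h, [/\ F \subset E, is_spanning_tree S F & injective_endpoints F h].
Proof.
move=> ES Econ sS.
suff grow n U : #|S :\: U| = n -> s \in U -> U \subset S ->
    (exists F h, [/\ F \subset E, is_spanning_tree U F & injective_endpoints F h]) ->
    exists F h, [/\ F \subset E, is_spanning_tree S F & injective_endpoints F h].
  apply: (grow _ [set s] erefl); rewrite ?set11 ?sub1set //.
  exists set0, (fun=> s); split; rewrite ?sub0set ?spanning_tree1 //.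
  by split=> e; rewrite inE.
elim: n U => [|n IHn] U SUn sU US [F [h [FE UF Fh]]].
  suff -> : S = U by exists F, h.
  by apply/eqP; rewrite eqEsubset US andbT -setD_eq0 -cards_eq0 SUn.
have /set0Pn[y] : S :\: U != set0 by rewrite -card_gt0 SUn.
rewrite inE => /andP[yU yS].
have [u [v [uU vU uvE]]] := connected_crossing_edge Econ sU (subsetP US _ sU) yS yU.
have vS : v \in S by have [_ /subsetP] := ES _ uvE; apply; rewrite set22.
case/spanning_treeP: (UF) => UF2 _ _.
apply: (IHn (v |: U)).
- have -> : S :\: (v |: U) = S :\: U :\ v by rewrite setDDl setUC.
  by move: SUn; rewrite (cardsD1 v) !inE vS vU => -[].
- by rewrite setU1r.
- by rewrite subUset sub1set vS US.
exists ([set u; v] |: F), (fun e => if e == [set u; v] then v else h e); split.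
- by rewrite subUset sub1set uvE FE.
- exact: spanning_tree_add_leaf.
- by apply: (injective_endpoints_add_leaf _ vU Fh) => e /UF2[].
Qed.

Lemma connected_spanning_tree {E S} :
  {in E, forall e, #|e| = 2 /\ e \subset S} ->
  {in S &, forall x y, connect (adj E) x y} ->
  exists2 F : {set {set V}}, F \subset E & is_spanning_tree S F.
Proof.
move=> ES Econ; have [->|[s sS]] := set_0Vmem S.
  by exists set0; rewrite ?sub0set ?spanning_tree0.
by have [F [_ [FE SF _]]] := connected_spanning_tree_from ES Econ sS; exists F.
Qed.

Lemma MST_le {R : realDomainType} {c : V -> V -> R} {S TX F} :
  is_MST S c TX -> is_spanning_tree S F -> weight c TX <= weight c F.
Proof. by case/andP=> _ /forallP/(_ F)/implyP. Qed.

Lemma MST_le_connected {R : realDomainType} {c : V -> V -> R} {S TX E} :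
  (forall x y, 0 <= c x y) -> is_MST S c TX ->
  {in E, forall e, #|e| = 2 /\ e \subset S} ->
  {in S &, forall x y, connect (adj E) x y} -> weight c TX <= weight c E.
Proof.
move=> c_ge0 TX_MST ES Econ; have [F FE SF] := connected_spanning_tree ES Econ.
exact: le_trans (MST_le TX_MST SF) (weight_subset c_ge0 FE).
Qed.

Lemma MST_weight_eq {R : realDomainType} {c : V -> V -> R} {S T1 T2} :
  is_MST S c T1 -> is_MST S c T2 -> weight c T1 = weight c T2.
Proof.
move=> T1_MST T2_MST; apply/eqP; rewrite eq_le.
by rewrite (MST_le T1_MST (proj1 (andP T2_MST))) (MST_le T2_MST (proj1 (andP T1_MST))).
Qed.

End Trees.

Lemma within_parts_sub {T : finType} (P F : {set {set T}}) : within_parts P F \subset F.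
Proof. by apply/subsetP => e /setIdP[]. Qed.

Section Metric.
Context {R : realDomainType} {T : finType} {d : T -> T -> R} (d_metric : is_metric d).
Implicit Types (x y z : T) (e A B RA : {set T}) (F : {set {set T}}).

Lemma metric_xx x : d x x = 0.
Proof. by case: d_metric => d0 _ _; apply/d0. Qed.

Lemma metricC x y : d x y = d y x.
Proof. by case: d_metric. Qed.

Lemma metric_triangle x y z : d x z <= d x y + d y z.
Proof. by case: d_metric. Qed.

Lemma metric_ge0 x y : 0 <= d x y.
Proof.
have := metric_triangle x y x; rewrite metric_xx (metricC y x) => h; lra.
Qed.

Lemma metric_gt0 x y : x != y -> 0 < d x y.
Proof.
move=> xy; rewrite lt_def metric_ge0 andbT.
by case: d_metric => d0 _ _; apply: contraNneq xy => /d0 ->; rewrite eqxx.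
Qed.

Lemma edge_w_metric_le x y : edge_w d [set x; y] <= d x y.
Proof.
have [<-|xy] := eqVneq x y; last by rewrite edge_w_set2 // => a b; apply: metricC.
rewrite /edge_w (_ : [set p in _ | _] = set0) ?fmin_set0 ?metric_ge0 //.
apply/setP => -[a b]; rewrite !inE /= !orbb.
by case: (a =P x) => // ->; case: (b =P x) => // ->; rewrite eqxx.
Qed.

Lemma weight_metric_eq0 F : {in F, forall e, #|e| = 2} -> weight d F = 0 -> F = set0.
Proof.
move=> F2 /psumr_eq0P w0; apply/setP => e; rewrite inE; apply/negP => eF.
have /cards2P[x [y [xy exy]]] : #|e| == 2 by rewrite F2.
have := w0 (fun e _ => edge_w_ge0 metric_ge0 e) e eF.
rewrite exy edge_w_set2 //; last exact: metricC.
by move/eqP; rewrite gt_eqF // metric_gt0.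
Qed.

Context {Rep : {set T} -> {set T}}.

Lemma cost_ge0 A RA : 0 <= cost d A RA.
Proof. by apply: fmax_ge0 => x _; apply: fmin_ge0 => r _; apply: metric_ge0. Qed.

Lemma costP_ge0 (Q : {set {set T}}) : 0 <= costP d Q Rep.
Proof. by apply: sumr_ge0 => A _; apply: cost_ge0. Qed.

Lemma hatwC A B : hatw d Rep A B = hatw d Rep B A.
Proof. by rewrite /hatw minC. Qed.

Lemma hatw_le_cost A B x y : x \in A -> y \in B -> Rep B != set0 ->
  hatw d Rep A B <= d x y + cost d B (Rep B).
Proof.
move=> xA yB /set0Pn[r0 r0R].
have [r rR r_min] := fmin_attained (d y) r0R.
have xr_le : setdist d A (Rep B) <= d x r.
  by apply: (fmin_le (fun p => d p.1 p.2) (x := (x, r))); rewrite in_setX xA rR.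
have yr_le : d y r <= cost d B (Rep B).
  by rewrite -r_min; apply: (fmax_ge (fun z => fmin (Rep B) (d z)) yB).
rewrite /hatw ge_min; apply/orP; left; apply: le_trans xr_le _.
by apply: le_trans (metric_triangle x y r) _; rewrite lerD2l.
Qed.

Context {P : {set {set T}}} (P_part : partition P [set: T]).
Context (Rep_in : forall A, A \in P -> Rep A \subset A /\ Rep A != set0).

Lemma pblock_in x : pblock P x \in P.
Proof. by rewrite pblock_mem // (cover_partition P_part) inE. Qed.

Lemma mem_pblockT x : x \in pblock P x.
Proof. by rewrite mem_pblock (cover_partition P_part) inE. Qed.

Lemma pblock_of {A x} : A \in P -> x \in A -> pblock P x = A.
Proof. by apply: def_pblock; case/and3P: P_part. Qed.

Lemma mem_cross_edges F e :
  (e \in F :\: within_parts P F) = (e \in F) && ~~ [exists A in P, e \subset A].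
Proof. by rewrite !inE; case: (e \in F); rewrite ?andbT ?andbF. Qed.

Lemma cross_edgeP {F e} : {in F, forall e, #|e| = 2} -> e \in F :\: within_parts P F ->
  exists x y, e = [set x; y] /\ pblock P x != pblock P y.
Proof.
move=> F2; rewrite mem_cross_edges => /andP[eF e_out].
have /cards2P[x [y [_ exy]]] : #|e| == 2 by rewrite F2.
exists x, y; split=> //; apply: contraNneq e_out => pxy.
apply/exists_inP; exists (pblock P x); first exact: pblock_in.
by rewrite exy subUset !sub1set {2}pxy !mem_pblockT.
Qed.

Definition contract_edges F : {set {set {set T}}} :=
  [set [set pblock P x | x in e] | e : {set T} in F :\: within_parts P F].

Lemma contract_edgeP {F} {e' : {set {set T}}} :
  {in F, forall e, #|e| = 2} -> e' \in contract_edges F ->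
  exists x y, [/\ [set x; y] \in F :\: within_parts P F,
                  e' = [set pblock P x; pblock P y] & pblock P x != pblock P y].
Proof.
move=> F2 /imsetP[e eC ->]; have [x [y [exy pxy]]] := cross_edgeP F2 eC.
by exists x, y; rewrite -exy eC exy imsetU1 imset_set1.
Qed.

Lemma contract_edges2 {F} : {in F, forall e, #|e| = 2} ->
  {in contract_edges F, forall e' : {set {set T}}, #|e'| = 2 /\ e' \subset P}.
Proof.
move=> F2 e' /(contract_edgeP F2)[x [y [_ -> pxy]]].
by rewrite cards2 pxy subUset !sub1set !pblock_in.
Qed.

Lemma contract_edges_connected {F} : (forall x y, connect (adj F) x y) ->
  {in P &, forall A B, connect (adj (contract_edges F)) A B}.
Proof.
move=> Fcon A B AP BP.
have block_witness C : C \in P -> exists x, x \in C.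
  by move=> CP; apply/set0Pn; case/and3P: P_part => _ _; apply: contraNneq => <-.
have [[x xA] [y yB]] := (block_witness A AP, block_witness B BP).
rewrite -(pblock_of AP xA) -(pblock_of BP yB).
apply: (connect_homo (pblock P) _ x y (Fcon x y)) => a b abF.
have [-> | pab] := eqVneq (pblock P a) (pblock P b); first exact: connect0.
apply: connect1; rewrite /adj /=.
have -> : [set pblock P a; pblock P b] = pblock P @: [set a; b] by rewrite imsetU1 imset_set1.
apply: imset_f.
rewrite mem_cross_edges [_ \in F]abF /=; apply: contraNN pab => /exists_inP[C CP].
by rewrite subUset !sub1set => /andP[aC bC]; rewrite (pblock_of CP aC) (pblock_of CP bC).
Qed.

Lemma edge_w_hatw_le x y A :
  pblock P x != pblock P y -> A \in [set pblock P x; pblock P y] ->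
  edge_w (hatw d Rep) [set pblock P x; pblock P y] <= edge_w d [set x; y] + cost d A (Rep A).
Proof.
move=> pxy pA; have xy : x != y by apply: contraNneq pxy => ->.
rewrite edge_w_set2 ?edge_w_set2 //; last exact: hatwC.
  case/set2P: pA => ->.
    rewrite hatwC metricC; apply: hatw_le_cost; rewrite ?mem_pblockT //.
    exact: (Rep_in _ (pblock_in x)).2.
  by apply: hatw_le_cost; rewrite ?mem_pblockT //; exact: (Rep_in _ (pblock_in y)).2.
by move=> a b; apply: metricC.
Qed.

Lemma contracted_tree_le {F} :
  {in F, forall e, #|e| = 2} -> (forall x y, connect (adj F) x y) ->
  exists2 TP : {set {set {set T}}}, is_spanning_tree P TP &
    weight (hatw d Rep) TP <= weight d (F :\: within_parts P F) + costP d P Rep.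
Proof.
move=> F2 Fcon.
have [P0|[A0 A0P]] := set_0Vmem P.
  exists set0; first by rewrite P0 spanning_tree0.
  by rewrite /weight big_set0 addr_ge0 ?costP_ge0 // weight_ge0 //; apply: metric_ge0.
have [TP [h [TP_sub TP_tree [h_inj h_in]]]] :=
  connected_spanning_tree_from (contract_edges2 F2) (contract_edges_connected Fcon) A0P.
exists TP => //.
pose pre (e' : {set {set T}}) :=
  odflt set0 [pick e in F :\: within_parts P F | pblock P @: e == e'].
have preP (e' : {set {set T}}) :
    e' \in TP -> pre e' \in F :\: within_parts P F /\ pblock P @: pre e' = e'.
  move=> /(subsetP TP_sub)/imsetP[e eC ->]; rewrite /pre.
  by case: pickP => [e1 /andP[e1C /eqP]|/(_ e)] //; rewrite eC eqxx.
have edge_le (e' : {set {set T}}) : e' \in TP ->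
    edge_w (hatw d Rep) e' <= edge_w d (pre e') + cost d (h e') (Rep (h e')).
  move=> e'TP; have [preC pre_e'] := preP e' e'TP.
  have [x [y [pre_xy pxy]]] := cross_edgeP F2 preC.
  rewrite pre_xy imsetU1 imset_set1 in pre_e'.
  by rewrite pre_xy -pre_e'; apply: edge_w_hatw_le; rewrite // pre_e' h_in.
have pre_inj : {in TP &, injective pre}.
  by move=> e1 e2 /preP[_ pe1] /preP[_ pe2] pre_eq; rewrite -pe1 -pe2 pre_eq.
rewrite /weight; apply: le_trans (ler_sum _ edge_le) _; rewrite big_split /=.
apply: lerD.
- rewrite -(big_imset (edge_w d) pre_inj) /=.
  apply: ler_sum_subset => [|e _]; last exact: (edge_w_ge0 metric_ge0).
  by apply/subsetP => _ /imsetP[e' /preP[? _] ->].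
- rewrite -(big_imset (fun A => cost d A (Rep A)) h_inj) /=.
  apply: ler_sum_subset => [|A _]; last exact: cost_ge0.
  apply/subsetP => _ /imsetP[e' e'TP ->].
  by have [_ /subsetP] := contract_edges2 F2 _ (subsetP TP_sub _ e'TP); apply; apply: h_in.
Qed.

Lemma MultiRepMFC_weight_le {Tr Th F} :
  MultiRepMFC_output d P Tr Rep Th -> is_spanning_tree [set: T] F ->
  weight d Th <= weight d (Et P Tr) + weight d (F :\: within_parts P F) + costP d P Rep.
Proof.
case=> TP [pr [TP_MST pr_spec ->]] /spanning_treeP[F2 Fcon _].
have [TP' TP'_tree TP'_le] := contracted_tree_le (fun e eF => (F2 e eF).1)
  (fun x y => Fcon x y (in_setT x) (in_setT y)).
rewrite -addrA; apply: le_trans (weight_setU metric_ge0 _ _) _; rewrite lerD2l.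
apply: (le_trans _ (le_trans (MST_le TP_MST TP'_tree) TP'_le)).
rewrite /weight; apply: le_trans (ler_sum_imset _ _ (edge_w_ge0 metric_ge0)) _.
apply: ler_sum => e eTP; apply: le_trans (edge_w_metric_le _ _) _.
have [A [B [-> AB _ ->]]] := pr_spec e eTP.
by rewrite edge_w_set2 //; apply: hatwC.
Qed.

Context {Tr : {set T} -> {set {set T}}}.
Context (Tr_tree : forall A, A \in P -> is_spanning_tree A (Tr A)).

Lemma Et_sub_within F : Et P Tr \subset F -> Et P Tr \subset within_parts P F.
Proof.
move=> EtF; apply/subsetP => e eEt; rewrite inE (subsetP EtF) //=.
case/bigcupP: eEt => A AP eTr; apply/exists_inP; exists A => //.
by case/spanning_treeP: (Tr_tree _ AP) => /(_ e eTr)[].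
Qed.

Lemma costP_eq0 : weight d (Et P Tr) = 0 -> costP d P Rep = 0.
Proof.
move=> Et0; apply: big1 => A AP.
case/spanning_treeP: (Tr_tree _ AP) => TrA2 TrA_con _.
have TrA0 : Tr A = set0.
  apply: weight_metric_eq0 => [e /TrA2[] //|]; apply/eqP.
  rewrite eq_le weight_ge0 ?andbT; last exact: metric_ge0.
  by rewrite -Et0 weight_subset //; [exact: metric_ge0 | exact: bigcup_sup].
have [r rR] := set0Pn _ (Rep_in _ AP).2.
apply/eqP; rewrite eq_le cost_ge0 andbT; apply: fmax_le => // z zA.
have := TrA_con z r zA (subsetP (Rep_in _ AP).1 r rR); rewrite TrA0 => /connect_adj0 zr.
by apply: le_trans (fmin_le (d z) rR) _; rewrite zr metric_xx.
Qed.

Lemma within_parts_weight_le {Tm} :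
  is_MST [set: T] d Tm -> weight d (within_parts P Tm) <= weight d (Et P Tr).
Proof.
move=> Tm_MST; case/andP: (Tm_MST) => /spanning_treeP[Tm2 Tm_con _] _.
set E := (Tm :\: within_parts P Tm) :|: Et P Tr.
have E2 : {in E, forall e, #|e| = 2 /\ e \subset [set: T]}.
  move=> e /setUP[/setDP[/Tm2 //]|/bigcupP[A AP eTr]].
  by case/spanning_treeP: (Tr_tree _ AP) => /(_ e eTr)[-> _] _ _; rewrite subsetT.
have E_con : {in [set: T] &, forall x y, connect (adj E) x y}.
  move=> x y xT yT; move: (Tm_con x y xT yT); apply: connect_sub => p q pqTm.
  have [/setIdP[_ /exists_inP[A AP pqA]]|pq_out] := boolP ([set p; q] \in within_parts P Tm).
    case/spanning_treeP: (Tr_tree _ AP) => _ TrA_con _.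
    apply: connect_adj_subset (TrA_con p q _ _); rewrite ?(subsetP pqA) ?set21 ?set22 //.
    exact: subset_trans (bigcup_sup A AP) (subsetUr _ _).
  by apply: connect1; apply/setUP; left; apply/setDP.
have := MST_le_connected metric_ge0 Tm_MST E2 E_con.
rewrite (weight_setD d (within_parts_sub P Tm)) => le_E.
move: (weight_setU metric_ge0 (Tm :\: within_parts P Tm) (Et P Tr)).
by move/(le_trans le_E); rewrite addrC lerD2l.
Qed.

End Metric.

Lemma gamma_den_attained {R : realDomainType} {T : finType} {d : T -> T -> R} P {TX} :
  is_MST [set: T] d TX ->
  exists2 Tm, is_MST [set: T] d Tm & gamma_den d P = weight d (within_parts P Tm).
Proof.
move=> TX_MST; have TX_in : TX \in [set F | is_MST [set: T] d F] by rewrite inE.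
have [Tm] := fmax_attained (fun F => weight d (within_parts P F)) TX_in.
by rewrite inE; exists Tm.
Qed.

Lemma MFC_ratio_le {R : realFieldType} {a x c : R} :
  0 <= a -> 0 <= x -> 0 <= c -> (a = 0 -> c = 0) -> a + x + c <= (1 + c / a) * (a + x).
Proof.
move=> a_ge0 x_ge0 c_ge0 c0; have [a0|a_neq0] := eqVneq a 0.
  by rewrite (c0 a0) a0 mul0r !addr0 add0r mul1r.
have -> : (1 + c / a) * (a + x) = a + x + c + c * x / a by field.
by rewrite lerDl divr_ge0 ?mulr_ge0.
Qed.

Lemma MST_ratio_le {R : realFieldType} {a b x c : R} :
  0 < b -> b <= a -> 0 <= x -> 0 <= c ->
  a + x + c <= (1 + c / a) * (a / b) * (b + x).
Proof.
move=> b_gt0 ba x_ge0 c_ge0; have a_gt0 : 0 < a := lt_le_trans b_gt0 ba.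
have -> : (1 + c / a) * (a / b) * (b + x) = a + x + c + (a + c - b) * x / b.
  by field; rewrite !gt_eqF.
have acb : 0 <= a + c - b by rewrite subr_ge0 ler_wpDr.
by rewrite lerDl divr_ge0 ?mulr_ge0 // ltW.
Qed.

Theorem theorem1 (R : realFieldType) (T : finType) (d : T -> T -> R)
  (P : {set {set T}}) (Tr : {set T} -> {set {set T}}) (Rep : {set T} -> {set T})
  (Th Tstar TX : {set {set T}}) :
  is_metric d ->
  is_initial_forest P Tr ->
  (forall A, A \in P -> (Rep A \subset A) /\ Rep A != set0) ->
  MultiRepMFC_output d P Tr Rep Th ->
  is_MFC_opt d P Tr Tstar ->
  is_MST [set: T] d TX ->
  weight d Th <= alpha d P Tr Rep * weight d Tstar /\
  (0 < gamma_den d P ->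
     weight d Th <= alpha d P Tr Rep * gamma d P Tr * weight d TX).
Proof.
move=> d_metric [P_part Tr_tree] Rep_in Th_out Tstar_opt TX_MST.
have d_ge0 := metric_ge0 d_metric.
have c_ge0 : 0 <= costP d P Rep := costP_ge0 d_metric P.
have Th_le := MultiRepMFC_weight_le d_metric P_part Rep_in Th_out.
split=> [|den_gt0].
- case/and3P: Tstar_opt => Tstar_tree Et_sub _.
  rewrite /alpha (weight_setD d Et_sub).
  apply: (le_trans _ (MFC_ratio_le (weight_ge0 d_ge0 _) (weight_ge0 d_ge0 _) c_ge0
                        (costP_eq0 d_metric Rep_in Tr_tree))).
  apply: le_trans (Th_le _ Tstar_tree) _.
  by rewrite lerD2r lerD2l weight_subset // setDS // Et_sub_within.
- have [Tm Tm_MST den_eq] := gamma_den_attained P TX_MST.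
  rewrite /alpha /gamma den_eq -(MST_weight_eq Tm_MST TX_MST).
  rewrite (weight_setD d (within_parts_sub P Tm)).
  apply: (le_trans _ (MST_ratio_le _ (within_parts_weight_le d_metric Tr_tree Tm_MST)
                        (weight_ge0 d_ge0 _) c_ge0)); last by rewrite -den_eq.
  exact: Th_le (proj1 (andP Tm_MST)).
Qed.
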